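(* Let $N\ge3$ be odd, $n\ge1$, $\tilde J>0$, $J_i=\tilde J/N^i$ for $1\le i\le n$, and let $0\le m\le n-1$ and $1\le s\le N$ be integers. Write $H_i=\mathcal H(h^{(m,s)};\gamma_i)$. If $s$ is odd, then $$H_{\lfloor sN^m/2\rfloor}=H_{\lfloor sN^m/2\rfloor+1}=\max_{1\le i\le sN^m}H_i=\max_{1\le i\le N^n}H_i,$$ and $H_i<H_{\lfloor sN^m/2\rfloor}$ for all $0\le i<\lfloor sN^m/2\rfloor$. If $s$ is even, then $$H_{\lfloor(s-1)N^m/2\rfloor+1}=\max_{1\le i\le sN^m}H_i=\max_{1\le i\le N^n}H_i,$$ and $H_i<H_{\lfloor(s-1)N^m/2\rfloor+1}$ for all $0\le i<\lfloor(s-1)N^m/2\rfloor+1$.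
   Context: Hierarchical lattice $\Lambda_N^n=\{1,\dots,N^n\}$; $k$-blocks are $\{jN^k+1,\dots,(j+1)N^k\}$; $d(a,b)$ is the smallest $k\ge0$ with $a,b$ in a common $k$-block. For a field $h$, $\mathcal H(h;\sigma)=-\frac12\sum_{\{v,w\},v\ne w}J_{d(v,w)}\sigma(v)\sigma(w)-\frac h2\sum_v\sigma(v)$ (unordered pairs). $\gamma_k$ is the configuration with $+1$ exactly on $\{1,\dots,k\}$ ($0\le k\le N^n$). $h^{(m,s)}=\tilde J\big[(1-\frac1N)(n-m)-(s-1)\frac1N\big]$. *)

From mathcomp Require Import all_boot all_order all_algebra.
Set Implicit Arguments. Unset Strict Implicit. Unset Printing Implicit Defensive.
Import Order.TTheory GRing.Theory Num.Theory.
Local Open Scope ring_scope.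

(* Sites of Lambda_N^n are encoded 0-based: site v in {1,...,N^n} is the
   natural number v-1 in {0,...,N^n - 1}.  The k-block
   {jN^k+1,...,(j+1)N^k} then becomes {jN^k,...,(j+1)N^k - 1}, i.e. the
   0-based sites a with a %/ N^k = j. *)

Definition hdist (N n a b : nat) : nat :=
  find (fun k : nat => (a %/ N ^ k == b %/ N ^ k)%N) (iota 0 n.+1).

Definition Ham {R : realFieldType} (N n : nat) (J : nat -> R) (h : R)
    (sigma : nat -> R) : R :=
  - (1 / 2) * (\sum_(v < N ^ n) \sum_(w < N ^ n | (v < w)%N)
                 J (hdist N n v w) * sigma v * sigma w)
  - h / 2 * \sum_(v < N ^ n) sigma v.

Definition gamma {R : realFieldType} (k : nat) : nat -> R :=
  fun v => if (v < k)%N then 1 else -1.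

Definition hms {R : realFieldType} (Jt : R) (N n m s : nat) : R :=
  Jt * ((1 - 1 / N%:R) * (n - m)%:R - (s - 1)%:R / N%:R).

Definition maxRange {R : realFieldType} (f : nat -> R) (a b : nat) : R :=
  \big[Num.max/f a]_(a <= i < b.+1) f i.

From mathcomp Require Import all_boot all_order all_algebra.
From mathcomp Require Import zify ring lra.
Set Implicit Arguments. Unset Strict Implicit. Unset Printing Implicit Defensive.
Import Order.TTheory GRing.Theory Num.Theory.

(* Passing from gamma_k to gamma_(k+1) flips the (0-based) site k, which changes
   the energy by (Jt/N)(c - 2 ds(k)), with c = m(N-1) + s - 1 and ds(k) the sum
   of the n base-N digits x_0, ..., x_(n-1) of k: exactly N^(d-1) x_(d-1) sites
   v < k, and N^(d-1) (N-1-x_(d-1)) sites w > k, lie at distance d from k, and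
   J_d N^(d-1) = Jt/N.  Hence H_k = H_0 + (Jt/N) E(k) with
   E(k) = sum_(j<k) (c - 2 ds(j)).  Splitting off the lowest digit gives the
   self-similarity E_(n+1,c)(bN + a) = (N-a) E_(n,c')(b) + a E_(n,c')(b+1) + a(N-a)
   with c' = c - (N-1): for N = 2p+1 a maximiser of E at scale m becomes one at
   scale m+1 under i |-> iN + p, since the bump a(N-a) peaks at a = p, p+1.  At
   scale m = 0, E(a) = a(s-a) for a <= N, and E(bN+a) <= E(a) for b > 0.  For even
   s the increments of E are odd, so the maximum is a single peak rather than a
   plateau. *)

Lemma leq_hdist (N n a b e : nat) :
  0 < N -> a < N ^ n -> b < N ^ n -> e <= n ->
  (hdist N n a b <= e) = (a %/ N ^ e == b %/ N ^ e).
Proof.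
move=> N_gt0 a_lt b_lt le_en; rewrite /hdist.
set P := (fun k : nat => _).
have P_mono k d : P k -> P (k + d) by rewrite /P expnD !divnMA => /eqP ->.
have has_P : has P (iota 0 n.+1).
  by apply/hasP; exists n; rewrite ?mem_iota /P ?divn_small //=; lia.
apply/idP/idP => [le_fe | Pe].
- have lt_f : find P (iota 0 n.+1) < n.+1 by rewrite -[X in _ < X](size_iota 0) -has_find.
  have := nth_find 0 has_P; rewrite nth_iota // add0n.
  by move=> /(P_mono _ (e - find P (iota 0 n.+1))); rewrite subnKC.
- rewrite leqNgt; apply/negP => /(before_find 0).
  by rewrite nth_iota ?add0n; [rewrite /P Pe | lia].
Qed.

Lemma hdist_gt0_le (N n a b : nat) :
  0 < N -> a < N ^ n -> b < N ^ n -> a != b -> 0 < hdist N n a b <= n.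
Proof.
move=> N_gt0 a_lt b_lt neq_ab.
by rewrite lt0n -leqn0 !leq_hdist // !expn0 !divn1 neq_ab !divn_small.
Qed.

Lemma sum_ord_interval (M lo hi : nat) : lo <= hi <= M ->
  \sum_(v < M | lo <= v < hi) 1 = hi - lo.
Proof.
case/andP=> le_lo_hi le_hi_M.
rewrite -[hi - lo]muln1 -sum_nat_const_nat (big_nat_widenl _ 0) //.
rewrite (big_nat_widen _ _ _ _ _ le_hi_M) big_mkord.
by apply: eq_bigl => v; rewrite andbC.
Qed.

Lemma big_ord_pred1_nat (R : Type) (idx : R) (op : Monoid.law idx) (M k : nat)
    (F : nat -> R) :
  k < M -> \big[op/idx]_(v < M | v == k :> nat) F v = F k.
Proof. by move=> lt_kM; rewrite (big_pred1 (Ordinal lt_kM)). Qed.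

Lemma sum_by_level (R : pzSemiRingType) (M n : nat) (P : pred nat) (f : nat -> nat)
    (J : nat -> R) :
  (forall v, v < M -> P v -> 0 < f v <= n) ->
  (\sum_(v < M | P v) J (f v) =
   \sum_(d < n) (\sum_(v < M | P v && (f v <= d.+1)) 1
                 - \sum_(v < M | P v && (f v <= d)) 1)%N%:R * J d.+1)%R.
Proof.
move=> f_range.
have layer d : \sum_(v < M | P v && (f v <= d.+1)) 1
    - \sum_(v < M | P v && (f v <= d)) 1 = \sum_(v < M | P v && (f v == d.+1)) 1.
  rewrite !big_mkcondr -sumnB => [|v _]; last by case: ifP => // /leqW ->.
  by apply: eq_bigr => v _; do 3 case: ifP; lia.
apply: esym; under eq_bigr do rewrite layer natr_sum GRing.mulr_suml big_mkcondr.
rewrite exchange_big; apply: eq_bigr => v /= Pv.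
have /andP[fv_gt0 fv_le] := f_range v (ltn_ord v) Pv.
rewrite -big_mkcond /= (eq_bigl (fun d : 'I_n => d == (f v).-1 :> nat)) => [|d].
  by rewrite (big_ord_pred1_nat _ (fun i => 1 * J i.+1)%R) ?mul1r ?prednK //; lia.
by case: (f v) fv_gt0 => // x _; rewrite eqSS eq_sym.
Qed.

Section SameBlock.

Variables (N n k : nat).
Hypotheses (N_gt0 : 0 < N) (k_lt : k < N ^ n).

Lemma sum_below_same_block e : e <= n ->
  \sum_(v < N ^ n | (v < k) && (hdist N n v k <= e)) 1 = k %% N ^ e.
Proof.
move=> le_en; have Ne_gt0 : 0 < N ^ e by rewrite expn_gt0 N_gt0.
rewrite (eq_bigl (fun v : 'I_(N ^ n) => k %/ N ^ e * N ^ e <= v < k)) => [|v].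
  by rewrite sum_ord_interval ?leq_divM ?(ltnW k_lt) //; have := divn_eq k (N ^ e); lia.
case: (ltnP v k) => [lt_vk | _]; rewrite ?andbF // andbT leq_hdist // ?(ltn_trans lt_vk) //.
by rewrite -leq_divRL // eqn_leq leq_div2r ?(ltnW lt_vk).
Qed.

Lemma sum_above_same_block e : e <= n ->
  \sum_(w < N ^ n | (k < w) && (hdist N n k w <= e)) 1 = N ^ e - (k %% N ^ e).+1.
Proof.
move=> le_en; have Ne_gt0 : 0 < N ^ e by rewrite expn_gt0 N_gt0.
have block_end : (k %/ N ^ e).+1 * N ^ e <= N ^ n.
  by rewrite -leq_divRL // -(subnK le_en) expnD mulnK // ltn_divLR // -expnD subnK.
rewrite (eq_bigl (fun w : 'I_(N ^ n) => k.+1 <= w < (k %/ N ^ e).+1 * N ^ e)) => [|w].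
  rewrite sum_ord_interval; last by rewrite block_end -ltn_divLR // ltnSn.
  by rewrite {2}(divn_eq k (N ^ e)); have := ltn_pmod k Ne_gt0; lia.
case: (ltnP k w) => [lt_kw | _]; rewrite ?andbF //= leq_hdist // ?(ltn_trans lt_kw) //.
by rewrite -ltn_divLR // ltnS eqn_leq leq_div2r ?(ltnW lt_kw) ?andbT.
Qed.

End SameBlock.

Definition digit_sum (N n k : nat) : nat := \sum_(d < n) k %/ N ^ d %% N.

Lemma digit_sumS (N n k : nat) : digit_sum N n.+1 k = k %% N + digit_sum N n (k %/ N).
Proof.
rewrite /digit_sum big_ord_recl expn0 divn1; congr (_ + _).
by apply: eq_bigr => d _; rewrite expnS divnMA.
Qed.

Lemma digit_sum0 (N n : nat) : digit_sum N n 0 = 0.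
Proof. by rewrite /digit_sum big1 // => d _; rewrite div0n mod0n. Qed.

Lemma digit_sum_mulD (N n b a : nat) : a < N ->
  digit_sum N n.+1 (b * N + a) = a + digit_sum N n b.
Proof.
move=> lt_aN; have N_gt0 : 0 < N by apply: leq_ltn_trans lt_aN.
by rewrite digit_sumS modnMDl modn_small // divnMDl // divn_small // addn0.
Qed.

Lemma modn_expS (N d k : nat) : 0 < N ->
  k %% N ^ d.+1 = k %% N ^ d + N ^ d * (k %/ N ^ d %% N).
Proof.
move=> N_gt0; rewrite modn_divl -expnS.
set x := k %% N ^ d.+1.
have -> : k %% N ^ d = x %% N ^ d by rewrite /x modn_dvdm // dvdn_exp2l.
by rewrite {1}(divn_eq x (N ^ d)) addnC mulnC.
Qed.

Lemma subn_block_levels (D N r x : nat) : r < D -> x < N ->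
  D * N - (r + D * x).+1 - (D - r.+1) = D * (N.-1 - x).
Proof.
move=> lt_rD lt_xN; have [y ->] : exists y, N = (x + y).+1 by exists (N - x.+1); lia.
by rewrite /= addKn mulnS mulnDr; lia.
Qed.

Local Open Scope ring_scope.

Section LevelSums.

Variables (R : numFieldType) (N n k : nat) (Jt : R) (J : nat -> R).
Hypotheses (N_gt0 : (0 < N)%N) (k_lt : (k < N ^ n)%N).
Hypothesis J_def : forall i, (1 <= i <= n)%N -> J i = Jt / (N ^ i)%:R.

Lemma level_weight d (c : nat) : (d < n)%N -> (N ^ d * c)%:R * J d.+1 = Jt / N%:R * c%:R.
Proof.
move=> lt_dn; rewrite J_def // expnS !natrM.
have N_neq0 : N%:R != 0 :> R by rewrite pnatr_eq0 eqn0Ngt N_gt0.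
have Nd_neq0 : (N ^ d)%:R != 0 :> R by rewrite pnatr_eq0 expn_eq0 eqn0Ngt N_gt0.
by field; apply/andP.
Qed.

Lemma sum_below_hdist :
  \sum_(v < N ^ n | (v < k)%N) J (hdist N n v k) = Jt / N%:R * (digit_sum N n k)%:R.
Proof.
rewrite (sum_by_level (n := n) (P := fun v => (v < k)%N) (f := fun v => hdist N n v k)).
  rewrite /digit_sum natr_sum mulr_sumr; apply: eq_bigr => d _.
  rewrite !sum_below_same_block ?ltn_ord ?(ltnW (ltn_ord d)) //.
  by rewrite modn_expS // addKn level_weight.
by move=> v v_lt lt_vk; apply: hdist_gt0_le; rewrite // ltn_eqF.
Qed.

Lemma sum_above_hdist :
  \sum_(w < N ^ n | (k < w)%N) J (hdist N n k w) =
    Jt / N%:R * (n%:R * (N%:R - 1) - (digit_sum N n k)%:R).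
Proof.
rewrite (sum_by_level (n := n) (P := fun w => (k < w)%N) (f := hdist N n k)); last first.
  by move=> w w_lt lt_kw; apply: hdist_gt0_le; rewrite // ltn_eqF.
have -> : n%:R * (N%:R - 1) = \sum_(d < n) (N%:R - 1) :> R.
  by rewrite sumr_const card_ord mulr_natl.
rewrite /digit_sum natr_sum -sumrB mulr_sumr; apply: eq_bigr => d _.
have digit_lt : (k %/ N ^ d %% N < N)%N by rewrite ltn_pmod.
have r_lt : (k %% N ^ d < N ^ d)%N by rewrite ltn_pmod // expn_gt0 N_gt0.
rewrite !sum_above_same_block ?ltn_ord ?(ltnW (ltn_ord d)) // modn_expS //.
rewrite expnSr subn_block_levels // level_weight // natrB; last by rewrite -ltnS prednK.
by rewrite -subn1 natrB.
Qed.

End LevelSums.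

Section SumPairsDelta.

Variables (V : nmodType) (M k : nat) (F : nat -> nat -> V).
Hypothesis k_lt : (k < M)%N.

Lemma sum_pairs_delta_right :
  \sum_(v < M) \sum_(w < M | (v < w)%N) (if w == k :> nat then F v w else 0) =
  \sum_(v < M | (v < k)%N) F v k.
Proof.
rewrite [RHS]big_mkcond; apply: eq_bigr => v _.
rewrite -big_mkcondr (eq_bigl (fun w : 'I_M => (w == k :> nat) && (v < k)%N)) => [|w].
  by rewrite big_mkcondr (big_ord_pred1_nat _ (fun w => if (v < k)%N then F v w else 0)).
by rewrite andbC; case: eqP => // ->.
Qed.

Lemma sum_pairs_delta_left :
  \sum_(v < M) \sum_(w < M | (v < w)%N) (if v == k :> nat then F v w else 0) =
  \sum_(w < M | (k < w)%N) F k w.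
Proof.
rewrite (eq_bigr (fun v : 'I_M =>
  if v == k :> nat then \sum_(w < M | (v < w)%N) F v w else 0)) => [|v _].
  by rewrite -big_mkcond (big_ord_pred1_nat _ (fun v => \sum_(w < M | (v < w)%N) F v w)).
by case: eqP => // _; rewrite big1.
Qed.

End SumPairsDelta.

Section GammaFlip.

Variables (R : realFieldType) (N n : nat) (J : nat -> R) (h : R) (k : nat).
Hypothesis k_lt : (k < N ^ n)%N.

Lemma gamma_succ_pair (x : R) v w : (v < w)%N ->
  x * gamma k.+1 v * gamma k.+1 w - x * gamma k v * gamma k w =
  (if w == k then 2 * x else 0) - (if v == k then 2 * x else 0).
Proof.
rewrite /gamma !ltnS => lt_vw.
case: (ltngtP v k) => [lt_vk|lt_kv|eq_vk]; case: (ltngtP w k) => [lt_wk|lt_kw|eq_wk] //=;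
  try (exfalso; lia); ring.
Qed.

Lemma ham_gamma_succ :
  Ham N n J h (gamma k.+1) - Ham N n J h (gamma k) =
  \sum_(w < N ^ n | (k < w)%N) J (hdist N n k w)
  - \sum_(v < N ^ n | (v < k)%N) J (hdist N n v k) - h.
Proof.
have spins : \sum_(v < N ^ n) gamma k.+1 v - \sum_(v < N ^ n) gamma k v = 2 :> R.
  rewrite -sumrB (eq_bigr (fun v : 'I_(N ^ n) => if v == k :> nat then 2 else 0)) => [|v _].
    by rewrite -big_mkcond (big_ord_pred1_nat _ (fun=> 2)).
  by rewrite /gamma ltnS; case: ltngtP => //= _; rewrite ?subrr //; lra.
have pairs :
  \sum_(v < N ^ n) \sum_(w < N ^ n | (v < w)%N) J (hdist N n v w) * gamma k.+1 v * gamma k.+1 w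
  - \sum_(v < N ^ n) \sum_(w < N ^ n | (v < w)%N) J (hdist N n v w) * gamma k v * gamma k w =
  2 * \sum_(v < N ^ n | (v < k)%N) J (hdist N n v k)
  - 2 * \sum_(w < N ^ n | (k < w)%N) J (hdist N n k w).
  set F := fun v w => 2 * J (hdist N n v w).
  rewrite -sumrB (eq_bigr (fun v : 'I_(N ^ n) =>
      \sum_(w < N ^ n | (v < w)%N) (if w == k :> nat then F v w else 0)
    - \sum_(w < N ^ n | (v < w)%N) (if v == k :> nat then F v w else 0))) => [|v _].
    by rewrite sumrB sum_pairs_delta_right // sum_pairs_delta_left // -!mulr_sumr.
  by rewrite -!sumrB; apply: eq_bigr => w lt_vw; rewrite gamma_succ_pair.
rewrite /Ham; move/eqP: spins; rewrite subr_eq => /eqP ->.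
move/eqP: pairs; rewrite subr_eq => /eqP ->.
by field.
Qed.

End GammaFlip.

Definition energy (N n : nat) (c : int) (k : nat) : int :=
  \sum_(j < k) (c - 2 * (digit_sum N n j)%:Z).

Definition refine (N : nat) (G : nat -> int) (i : nat) : int :=
  let b := (i %/ N)%N in let a := (i %% N)%N in
  (N%:Z - a%:Z) * G b + a%:Z * G b.+1 + a%:Z * (N%:Z - a%:Z).

Definition slope (N m s : nat) : int := m%:Z * (N%:Z - 1) + s%:Z - 1.

Section Energy.

Variable N : nat.

Lemma slopeS m s : slope N m.+1 s - (N%:Z - 1) = slope N m s.
Proof. by rewrite /slope intS; ring. Qed.

Lemma slope0 s : slope N 0 s - (N%:Z - 1) = s%:Z - N%:Z.
Proof. by rewrite /slope; ring. Qed.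

Lemma energy0 n c : energy N n c 0 = 0.
Proof. by rewrite /energy big_ord0. Qed.

Lemma energyS n c k : energy N n c k.+1 = energy N n c k + (c - 2 * (digit_sum N n k)%:Z).
Proof. by rewrite /energy big_ord_recr. Qed.

Lemma energy1 n c : energy N n c 1 = c.
Proof. by rewrite energyS energy0 digit_sum0 add0r mulr0 subr0. Qed.

Lemma energy_le_linear n c k : c <= 0 -> energy N n c k <= c * k%:Z.
Proof.
move=> c_le0; elim: k => [|k IH]; first by rewrite energy0 mulr0.
by rewrite energyS intS; lia.
Qed.

Lemma energyS_neq n x k : energy N n (2 * x + 1) k.+1 != energy N n (2 * x + 1) k.
Proof. by rewrite energyS; lia. Qed.

Lemma energy_mulD n c b a : (a <= N)%N ->
  energy N n.+1 c (b * N + a) = energy N n.+1 c (b * N) + a%:Z * c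
    - a%:Z * (a%:Z - 1) - 2 * a%:Z * (digit_sum N n b)%:Z.
Proof.
elim: a => [|a IH] le_aN; first by rewrite addn0; ring.
by rewrite addnS energyS IH ?(ltnW le_aN) // digit_sum_mulD // PoszD intS; ring.
Qed.

Lemma energy_mul n c b :
  energy N n.+1 c (b * N) = N%:Z * energy N n (c - (N%:Z - 1)) b.
Proof.
elim: b => [|b IH]; first by rewrite mul0n !energy0 mulr0.
by rewrite mulSnr energy_mulD // IH energyS; ring.
Qed.

Lemma energy_refine n c i : (0 < N)%N ->
  energy N n.+1 c i = refine N (energy N n (c - (N%:Z - 1))) i.
Proof.
move=> N_gt0; rewrite {1}(divn_eq i N) energy_mulD ?(ltnW (ltn_pmod _ _)) //.
by rewrite energy_mul /refine energyS; ring.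
Qed.

End Energy.

Lemma mul_sub_le_sqr (a q : int) : a * (2 * q - a) <= q * q.
Proof. by have := sqr_ge0 (q - a); rewrite expr2; nia. Qed.

Lemma mul_sub_lt_sqr (a q : int) : a < q -> a * (2 * q - a) < q * q.
Proof. by move=> lt_aq; have : 1 <= (q - a) * (q - a); nia. Qed.

Lemma mul_sub_le_pronic (a q : int) : a * (2 * q + 1 - a) <= q * (q + 1).
Proof. by case: (lerP a q) => ?; nia. Qed.

Lemma mul_sub_lt_pronic (a q : int) : a < q -> a * (2 * q + 1 - a) < q * (q + 1).
Proof. by move=> lt_aq; nia. Qed.

Lemma divn_decomp (N i : nat) : (0 < N)%N -> exists b a, i = (b * N + a)%N /\ (a < N)%N.
Proof. by move=> N_gt0; exists (i %/ N)%N, (i %% N)%N; rewrite -divn_eq ltn_pmod. Qed.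

Definition plateau_max (f : nat -> int) (K : nat) : Prop :=
  [/\ f K = f K.+1, forall i, f i <= f K & forall i, (i < K)%N -> f i < f K].

Definition rise_max (f : nat -> int) (B : nat) : Prop :=
  [/\ f B.+1 = f B + 1, forall i, f i <= f B.+1 & forall i, (i <= B)%N -> f i < f B.+1].

Lemma eq_plateau_max (f g : nat -> int) K : f =1 g -> plateau_max g K -> plateau_max f K.
Proof. by move=> fg [? ? ?]; split=> *; rewrite !fg; auto. Qed.

Lemma eq_rise_max (f g : nat -> int) B : f =1 g -> rise_max g B -> rise_max f B.
Proof. by move=> fg [? ? ?]; split=> *; rewrite !fg; auto. Qed.

Section OddN.

Variable p : nat.
Local Notation N := (2 * p + 1)%N.

Let N_gt0 : (0 < N)%N. Proof. by rewrite addn1. Qed.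
Let N_intE : N%:Z = 2 * p%:Z + 1. Proof. by lia. Qed.
Let odd_N : odd N. Proof. by rewrite addn1 /= mul2n odd_double. Qed.

Lemma half_mul_odd x : odd x -> (x * N %/ 2 = x %/ 2 * N + p)%N.
Proof.
move=> x_odd; rewrite {1}(divn_eq x 2) modn2 x_odd.
have -> : ((x %/ 2 * 2 + 1) * N = (x %/ 2 * N + p) * 2 + 1)%N by ring.
by rewrite divnMDl // [(1 %/ 2)%N]divn_small ?addn0.
Qed.

Section Refine.

Variable G : nat -> int.

Lemma refine_mulD b a : (a <= N)%N ->
  refine N G (b * N + a) = (N%:Z - a%:Z) * G b + a%:Z * G b.+1 + a%:Z * (N%:Z - a%:Z).
Proof.
rewrite leq_eqVlt => /orP[/eqP -> | lt_aN].
  by rewrite /refine -mulSnr modnMl mulnK //; ring.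
by rewrite /refine divnMDl // modnMDl modn_small // divn_small // addn0.
Qed.

Lemma refine_le_mulD b a x y : (a <= N)%N -> G b <= x -> G b.+1 <= y ->
  refine N G (b * N + a) <= (N%:Z - a%:Z) * x + a%:Z * y + a%:Z * (N%:Z - a%:Z).
Proof.
move=> le_aN le_Gx le_Gy; rewrite refine_mulD // lerD2r.
by apply: lerD; apply: ler_wpM2l => //; lia.
Qed.

Lemma refine_plateau K : plateau_max G K -> plateau_max (refine N G) (K * N + p).
Proof.
case=> GK1 G_le G_lt; set M := G K in GK1 G_le G_lt.
have at_K a : (a <= N)%N -> refine N G (K * N + a) = N%:Z * M + a%:Z * (N%:Z - a%:Z).
  by move=> le_aN; rewrite refine_mulD // -GK1; ring.
have top : refine N G (K * N + p) = N%:Z * M + p%:Z * (p%:Z + 1).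
  by rewrite at_K ?N_intE; [ring | lia].
split=> [|i|i]; rewrite top.
- by rewrite -addnS at_K; [rewrite N_intE; ring | lia].
- have [b [a [-> lt_aN]]] := divn_decomp i N_gt0.
  apply: (le_trans (refine_le_mulD (ltnW lt_aN) (G_le b) (G_le b.+1))).
  by have := mul_sub_le_pronic a p; rewrite N_intE; lia.
- have [b [a [-> lt_aN]]] := divn_decomp i N_gt0 => lt_i.
  have /orP[/eqP eq_bK | lt_bK] : (b == K) || (b < K)%N by rewrite -leq_eqVlt; nia.
    rewrite eq_bK at_K ?(ltnW lt_aN) // ltrD2l.
    have lt_ap : a%:Z < p%:Z by lia.
    by have := mul_sub_lt_pronic lt_ap; rewrite N_intE; lia.
  have G_b : G b <= M - 1 by have := G_lt b lt_bK; lia.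
  apply: (le_lt_trans (refine_le_mulD (ltnW lt_aN) G_b (G_le b.+1))).
  by have := mul_sub_le_pronic a p; rewrite N_intE; lia.
Qed.

Lemma refine_rise B : (forall b, G b.+1 != G b) -> rise_max G B ->
  rise_max (refine N G) (B * N + p).
Proof.
move=> G_neq [GB1 G_le G_lt]; set M := G B.+1 in GB1 G_le G_lt.
have GB : G B = M - 1 by rewrite GB1 addrK.
have at_B a : (a <= N)%N ->
    refine N G (B * N + a) = N%:Z * (M - 1) + a%:Z * (N%:Z + 1 - a%:Z).
  by move=> le_aN; rewrite refine_mulD // GB; ring.
have top : refine N G (B * N + p).+1 = N%:Z * (M - 1) + (p%:Z + 1) * (p%:Z + 1).
  by rewrite -addnS at_B ?N_intE; [ring | lia].
split=> [|i|i]; rewrite top.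
- by rewrite at_B; [rewrite N_intE; ring | lia].
- have [b [a [-> lt_aN]]] := divn_decomp i N_gt0.
  have G_b := G_le b; have G_b1 := G_le b.+1.
  case: (ltrP (G b) M) => [lt_GbM | ge_GbM].
    have G_b' : G b <= M - 1 by lia.
    apply: (le_trans (refine_le_mulD (ltnW lt_aN) G_b' G_b1)).
    by have := mul_sub_le_sqr a (p + 1); rewrite N_intE; lia.
  have G_b1' : G b.+1 <= M - 1 by have := G_neq b; lia.
  apply: (le_trans (refine_le_mulD (ltnW lt_aN) G_b G_b1')).
  by have := mul_sub_le_sqr a p; rewrite N_intE; lia.
- have [b [a [-> lt_aN]]] := divn_decomp i N_gt0 => le_i.
  have /orP[/eqP eq_bB | lt_bB] : (b == B) || (b < B)%N by rewrite -leq_eqVlt; nia.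
    rewrite eq_bB at_B ?(ltnW lt_aN) // ltrD2l.
    have lt_ap : a%:Z < p%:Z + 1 by lia.
    by have := mul_sub_lt_sqr lt_ap; rewrite N_intE; lia.
  have G_b : G b <= M - 1 by have := G_lt b (ltnW lt_bB); lia.
  have G_b1 : G b.+1 <= M - 1 by have := G_lt b.+1 lt_bB; lia.
  apply: (le_lt_trans (refine_le_mulD (ltnW lt_aN) G_b G_b1)).
  by have := mul_sub_le_pronic a p; rewrite N_intE; lia.
Qed.

Section BaseScale.

Variable s : nat.
Hypotheses (le_sN : (s <= N)%N) (G0 : G 0 = 0) (G1 : G 1 = s%:Z - N%:Z).
Hypothesis G_le_linear : forall b, G b <= (s%:Z - N%:Z) * b%:Z.

Lemma refine_small a : (a <= N)%N -> refine N G a = a%:Z * (s%:Z - a%:Z).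
Proof.
by move=> le_aN; have := refine_mulD 0 le_aN; rewrite mul0n add0n G0 G1 => ->; ring.
Qed.

Lemma refine_le_mod i : refine N G i <= refine N G (i %% N).
Proof.
have [b [a [-> lt_aN]]] := divn_decomp i N_gt0.
rewrite modnMDl modn_small // (refine_small (ltnW lt_aN)).
case: b => [|b]; first by rewrite mul0n add0n (refine_small (ltnW lt_aN)).
have G_le x : (0 < x)%N -> G x <= s%:Z - N%:Z.
  move=> x_gt0; have := G_le_linear x.
  have : (s%:Z - N%:Z) * (x%:Z - 1) <= 0 by apply: mulr_le0_ge0; lia.
  lia.
apply: (le_trans (refine_le_mulD (ltnW lt_aN) (G_le b.+1 isT) (G_le b.+2 isT))).
have : (N%:Z - a%:Z) * (s%:Z - N%:Z) <= 0 by apply: mulr_ge0_le0; lia.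
lia.
Qed.

Lemma refine_plateau_base : odd s -> plateau_max (refine N G) (s %/ 2).
Proof.
move=> s_odd; have := modn2 s; rewrite s_odd => s_mod2.
set t := (s %/ 2)%N; have s_eq : s = (2 * t + 1)%N by rewrite /t; lia.
have le_tN : (t.+1 <= N)%N by lia.
rewrite /plateau_max !refine_small ?(ltnW le_tN) //; split=> [|i|i lt_it].
- by rewrite s_eq; lia.
- apply: (le_trans (refine_le_mod i)); rewrite refine_small ?(ltnW (ltn_pmod i N_gt0)) //.
  by have := mul_sub_le_pronic (i %% N)%N t; rewrite s_eq; lia.
- rewrite refine_small; last by lia.
  have lt_it' : i%:Z < t%:Z by lia.
  by have := mul_sub_lt_pronic lt_it'; rewrite s_eq; lia.
Qed.

Lemma refine_rise_base : ~~ odd s -> (0 < s)%N -> rise_max (refine N G) ((s - 1) %/ 2).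
Proof.
move=> s_even s_gt0; have := modn2 s; rewrite (negbTE s_even) => s_mod2.
set t := ((s - 1) %/ 2)%N; have s_eq : s = (2 * t + 2)%N by rewrite /t; lia.
have le_tN : (t.+1 <= N)%N by lia.
rewrite /rise_max !refine_small ?(ltnW le_tN) //; split=> [|i|i le_it].
- by rewrite s_eq; lia.
- apply: (le_trans (refine_le_mod i)); rewrite refine_small ?(ltnW (ltn_pmod i N_gt0)) //.
  by have := mul_sub_le_sqr (i %% N)%N (t + 1); rewrite s_eq; lia.
- rewrite refine_small; last by lia.
  have lt_it' : i%:Z < t%:Z + 1 by lia.
  by have := mul_sub_lt_sqr lt_it'; rewrite s_eq; lia.
Qed.

End BaseScale.

End Refine.

Lemma energy_plateau m n s : (m < n)%N -> odd s -> (s <= N)%N ->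
  plateau_max (energy N n (slope N m s)) (s * N ^ m %/ 2).
Proof.
move=> + s_odd le_sN; elim: m n => [|m IH] [|n] // lt_mn.
  apply: (eq_plateau_max (fun i => energy_refine n _ i N_gt0)).
  rewrite expn0 muln1 slope0; apply: refine_plateau_base => //.
  - exact: energy0.
  - exact: energy1.
  - by move=> b; apply: energy_le_linear; lia.
apply: (eq_plateau_max (fun i => energy_refine n _ i N_gt0)).
rewrite slopeS expnSr mulnA half_mul_odd ?oddM ?oddX ?s_odd ?odd_N ?orbT //.
exact/refine_plateau/IH.
Qed.

Lemma energy_rise m n s : (m < n)%N -> ~~ odd s -> (0 < s <= N)%N ->
  rise_max (energy N n (slope N m s)) ((s - 1) * N ^ m %/ 2).
Proof.
move=> + s_even /andP[s_gt0 le_sN]; elim: m n => [|m IH] [|n] // lt_mn.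
  apply: (eq_rise_max (fun i => energy_refine n _ i N_gt0)).
  rewrite expn0 muln1 slope0; apply: refine_rise_base => //.
  - exact: energy0.
  - exact: energy1.
  - by move=> b; apply: energy_le_linear; lia.
apply: (eq_rise_max (fun i => energy_refine n _ i N_gt0)).
have s1_odd : odd (s - 1) by rewrite oddB // (negbTE s_even).
rewrite slopeS expnSr mulnA half_mul_odd ?oddM ?oddX ?s1_odd ?odd_N ?orbT //.
apply: refine_rise; last exact: IH.
have := modn2 s; rewrite (negbTE s_even) => s_mod2.
have -> : slope N m s = 2 * (m%:Z * p%:Z + (s %/ 2)%:Z - 1) + 1 by rewrite /slope; lia.
by move=> b; apply: energyS_neq.
Qed.

End OddN.

Lemma ham_gamma_energy (R : realFieldType) (N n : nat) (Jt : R) (J : nat -> R)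
    (m s k : nat) :
  (0 < N)%N -> (m <= n)%N -> (0 < s)%N ->
  (forall i, (1 <= i <= n)%N -> J i = Jt / (N ^ i)%:R) -> (k <= N ^ n)%N ->
  Ham N n J (hms Jt N n m s) (gamma k) =
    Ham N n J (hms Jt N n m s) (gamma 0) + Jt / N%:R * (energy N n (slope N m s) k)%:~R.
Proof.
move=> N_gt0 le_mn s_gt0 J_def; elim: k => [|k IH] lt_k; first by rewrite energy0 mulr0 addr0.
rewrite -[LHS](subrK (Ham N n J (hms Jt N n m s) (gamma k))) ham_gamma_succ //.
rewrite (sum_above_hdist N_gt0 lt_k J_def) (sum_below_hdist N_gt0 lt_k J_def).
rewrite IH ?(ltnW lt_k) // energyS /slope /hms !(intrD, intrM, intrB) natrB // natrB //.
have N_neq0 : N%:R != 0 :> R by rewrite pnatr_eq0 eqn0Ngt N_gt0.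
by field.
Qed.

Lemma maxRange_eq (R : realFieldType) (f : nat -> R) (a b x : nat) :
  (a <= x <= b)%N -> (forall i, (a <= i <= b)%N -> f i <= f x) -> maxRange f a b = f x.
Proof.
move=> /andP[le_ax le_xb] f_le; apply/le_anti/andP; split.
  rewrite /maxRange big_nat_cond; apply: bigmax_le => [|i /andP[/andP[le_ai lt_ib] _]].
    by apply: f_le; rewrite leqnn (leq_trans le_ax le_xb).
  by apply: f_le; rewrite le_ai -ltnS.
by rewrite /maxRange; apply: le_bigmax_seq; rewrite ?mem_index_iota ?ltnS ?le_ax.
Qed.

Section MaxTransfer.

Variables (R : realFieldType) (H : nat -> R) (E : nat -> int) (L : nat) (H0 C : R).
Hypotheses (C_gt0 : 0 < C) (H_E : forall k, (k <= L)%N -> H k = H0 + C * (E k)%:~R).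

Lemma ltr_energy i j : (i <= L)%N -> (j <= L)%N -> (H i < H j) = (E i < E j).
Proof. by move=> le_iL le_jL; rewrite !H_E // ltrD2l ltr_pM2l // ltr_int. Qed.

Lemma maxRange_energy x b : (1 <= x <= b)%N -> (b <= L)%N ->
  (forall i, E i <= E x) -> maxRange H 1 b = H x.
Proof.
move=> /andP[x_gt0 le_xb] le_bL E_le; apply: maxRange_eq => [|i /andP[_ le_ib]].
  by rewrite x_gt0.
by rewrite !H_E ?(leq_trans le_ib) ?(leq_trans le_xb) // lerD2l ler_pM2l // ler_int.
Qed.

Lemma plateau_max_maxRange K M : (K < M <= L)%N -> plateau_max E K ->
  [/\ H K = H K.+1, H K.+1 = maxRange H 1 M, maxRange H 1 M = maxRange H 1 L
    & forall i, (i < K)%N -> H i < H K].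
Proof.
case/andP=> lt_KM le_ML [EK E_le E_lt]; have lt_KL := leq_trans lt_KM le_ML.
have E_le1 i : E i <= E K.+1 by rewrite -EK.
split; first by rewrite !H_E ?EK // ltnW.
- by rewrite (maxRange_energy (x := K.+1)) ?lt_KM.
- by rewrite !(maxRange_energy (x := K.+1)) ?lt_KM ?lt_KL.
- by move=> i lt_iK; rewrite ltr_energy ?E_lt //; lia.
Qed.

Lemma rise_max_maxRange B M : (B < M <= L)%N -> rise_max E B ->
  [/\ H B.+1 = maxRange H 1 M, maxRange H 1 M = maxRange H 1 L
    & forall i, (i < B.+1)%N -> H i < H B.+1].
Proof.
case/andP=> lt_BM le_ML [EB1 E_le E_lt]; have lt_BL := leq_trans lt_BM le_ML.
split; first by rewrite (maxRange_energy (x := B.+1)) ?lt_BM.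
- by rewrite !(maxRange_energy (x := B.+1)) ?lt_BM ?lt_BL.
- by move=> i le_iB; rewrite ltr_energy ?E_lt //; lia.
Qed.

End MaxTransfer.

Theorem proposition4p6 (R : realFieldType) (N n : nat) (Jt : R) (J : nat -> R)
    (m s : nat) :
  (3 <= N)%N -> odd N -> (1 <= n)%N -> 0 < Jt ->
  (forall i, (1 <= i <= n)%N -> J i = Jt / (N ^ i)%:R) ->
  (m <= n - 1)%N -> (1 <= s <= N)%N ->
  let H := fun i : nat => Ham N n J (hms Jt N n m s) (gamma i) in
  (odd s ->
     let K := ((s * N ^ m) %/ 2)%N in
     [/\ H K = H K.+1,
         H K.+1 = maxRange H 1 (s * N ^ m),
         maxRange H 1 (s * N ^ m) = maxRange H 1 (N ^ n)
       & forall i, (i < K)%N -> H i < H K]) /\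
  (~~ odd s ->
     let K := (((s - 1) * N ^ m) %/ 2).+1 in
     [/\ H K = maxRange H 1 (s * N ^ m),
         maxRange H 1 (s * N ^ m) = maxRange H 1 (N ^ n)
       & forall i, (i < K)%N -> H i < H K]).
Proof.
move=> N_ge3 N_odd n_gt0 Jt_gt0 J_def le_mn1 /andP[s_gt0 le_sN] H.
have [p N_eq] : exists p, N = (2 * p + 1)%N.
  by exists N./2; rewrite -[LHS]odd_double_half N_odd addnC mul2n.
have lt_mn : (m < n)%N by lia.
have N_gt0 : (0 < N)%N by lia.
have Nm_gt0 : (0 < N ^ m)%N by rewrite expn_gt0 N_gt0.
have le_sNm : (s * N ^ m <= N ^ n)%N.
  by rewrite (leq_trans (leq_mul le_sN (leqnn _))) // -expnS leq_pexp2l.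
have C_gt0 : 0 < Jt / N%:R by rewrite divr_gt0 ?ltr0n.
have H_E k : (k <= N ^ n)%N -> H k = H 0 + Jt / N%:R * (energy N n (slope N m s) k)%:~R.
  exact: ham_gamma_energy N_gt0 (ltnW lt_mn) s_gt0 J_def.
split=> [s_odd K | s_even K].
- apply: (plateau_max_maxRange C_gt0 H_E); first by rewrite ltn_Pdiv ?muln_gt0 ?s_gt0.
  by rewrite /K N_eq; apply: energy_plateau; rewrite -?N_eq.
- apply: (rise_max_maxRange C_gt0 H_E).
    by rewrite le_sNm (leq_ltn_trans (leq_div _ _)) // ltn_pmul2r //; lia.
  by rewrite N_eq; apply: energy_rise; rewrite -?N_eq ?s_gt0.
Qed.
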